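(* Let $A$ be a finite set, $\rho\subseteq A^n$ a key relation, and $\boldsymbol f=(f_1,\dots,f_n)$ a vector-function of arity $m$ (each $f_i:A^m\to A$) which preserves $\rho$. Then $\boldsymbol f$ preserves $\mathrm{Key}(\rho)$.
   Context: A unary vector-function is a tuple $\Psi=(\psi_1,\dots,\psi_n)$ of maps $\psi_i:A\to A$ acting coordinatewise; it preserves $\rho$ if $\Psi(\rho)\subseteq\rho$. $\rho$ is a key relation if there is $\beta\in A^n\setminus\rho$ (a key tuple) such that every $\alpha\in A^n\setminus\rho$ is mapped to $\beta$ by some unary vector-function preserving $\rho$. $\mathrm{Key}(\rho)$ is $\rho$ together with all key tuples for $\rho$. An $m$-ary vector-function $(f_1,\dots,f_n)$ preserves a relation $\tau\subseteq A^n$ if for all $\alpha^1,\dots,\alpha^m\in\tau$ the tuple $(f_1(\alpha^1(1),\dots,\alpha^m(1)),\dots,f_n(\alpha^1(n),\dots,\alpha^m(n)))$ lies in $\tau$. *)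

From mathcomp Require Import all_boot.
Set Implicit Arguments. Unset Strict Implicit. Unset Printing Implicit Defensive.

Notation tup A n := {ffun 'I_n -> A}.

Definition uvapp (A : finType) (n : nat) (psi : 'I_n -> A -> A) (a : tup A n)
  : tup A n := [ffun i => psi i (a i)].

Definition upreserves (A : finType) (n : nat) (psi : 'I_n -> A -> A)
  (rho : {set tup A n}) : Prop :=
  forall a, a \in rho -> uvapp psi a \in rho.

Definition is_key_tuple (A : finType) (n : nat) (rho : {set tup A n})
  (b : tup A n) : Prop :=
  b \notin rho /\
  forall a, a \notin rho ->
    exists psi : 'I_n -> A -> A, upreserves psi rho /\ uvapp psi a = b.

Definition key_relation (A : finType) (n : nat) (rho : {set tup A n}) : Prop :=
  exists b, is_key_tuple rho b.

Definition Key (A : finType) (n : nat) (rho : {set tup A n}) : tup A n -> Prop :=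
  fun b => b \in rho \/ is_key_tuple rho b.

Definition vapp (A : finType) (n m : nat) (f : 'I_n -> ({ffun 'I_m -> A} -> A))
  (alpha : 'I_m -> tup A n) : tup A n :=
  [ffun i => f i [ffun j => alpha j i]].

Definition vpreserves (A : finType) (n m : nat)
  (f : 'I_n -> ({ffun 'I_m -> A} -> A)) (tau : tup A n -> Prop) : Prop :=
  forall alpha : 'I_m -> tup A n, (forall j, tau (alpha j)) -> tau (vapp f alpha).

From mathcomp Require Import all_boot.
From Stdlib Require Import ClassicalEpsilon.

Set Implicit Arguments.
Unset Strict Implicit.

(* A key tuple b can be sent into every tuple of Key(rho) by a unary
   vector-function preserving rho (constant maps reach rho itself).  Choosing
   such a Psi_j for each argument alpha^j of f and composing coordinatewise with
   f yields a rho-preserving unary vector-function Phi with Phi(b) = f(alpha).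
   If f(alpha) lies outside rho, then every tuple outside rho reaches b and
   hence f(alpha), so f(alpha) is itself a key tuple. *)

Section UnaryVectorFunctions.

Variables (A : finType) (n : nat).
Implicit Types (rho : {set tup A n}) (psi : 'I_n -> A -> A).

Lemma uvapp_comp (p q : 'I_n -> A -> A) (a : tup A n) :
  uvapp (fun i x => p i (q i x)) a = uvapp p (uvapp q a).
Proof. by apply/ffunP => i; rewrite !ffunE. Qed.

Lemma upreserves_comp rho (p q : 'I_n -> A -> A) :
  upreserves p rho -> upreserves q rho -> upreserves (fun i x => p i (q i x)) rho.
Proof. by move=> pP qP a arho; rewrite uvapp_comp; apply/pP/qP. Qed.

Lemma uvapp_const (c a : tup A n) : uvapp (fun i _ => c i) a = c.
Proof. by apply/ffunP => i; rewrite ffunE. Qed.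

Lemma upreserves_const rho (c : tup A n) :
  c \in rho -> upreserves (fun i _ => c i) rho.
Proof. by move=> crho a _; rewrite uvapp_const. Qed.

Lemma key_tuple_reaches_Key rho (b c : tup A n) :
  is_key_tuple rho b -> Key rho c ->
  exists psi, upreserves psi rho /\ uvapp psi b = c.
Proof.
move=> [bNrho _] [crho | [cNrho ckey]]; last exact: ckey.
by exists (fun i _ => c i); split; [exact: upreserves_const | exact: uvapp_const].
Qed.

Lemma key_tuple_image rho psi (b : tup A n) :
  is_key_tuple rho b -> upreserves psi rho ->
  uvapp psi b \notin rho -> is_key_tuple rho (uvapp psi b).
Proof.
move=> [_ bkey] psiP imNrho; split=> // a aNrho.
have [q [qP qa]] := bkey a aNrho.
exists (fun i x => psi i (q i x)); split; first exact: upreserves_comp.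
by rewrite uvapp_comp qa.
Qed.

End UnaryVectorFunctions.

Section VectorFunctions.

Variables (A : finType) (n m : nat) (f : 'I_n -> ({ffun 'I_m -> A} -> A)).

Lemma eq_vapp (alpha beta : 'I_m -> tup A n) :
  (forall j, alpha j = beta j) -> vapp f alpha = vapp f beta.
Proof.
move=> eq_ab; apply/ffunP => i; rewrite !ffunE; congr (f i _).
by apply/ffunP => j; rewrite !ffunE eq_ab.
Qed.

Definition vcomp (Psi : 'I_m -> 'I_n -> A -> A) : 'I_n -> A -> A :=
  fun i x => f i [ffun j => Psi j i x].

Lemma uvapp_vcomp (Psi : 'I_m -> 'I_n -> A -> A) (a : tup A n) :
  uvapp (vcomp Psi) a = vapp f (fun j => uvapp (Psi j) a).
Proof.
apply/ffunP => i; rewrite !ffunE; congr (f i _).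
by apply/ffunP => j; rewrite !ffunE.
Qed.

Lemma upreserves_vcomp (rho : {set tup A n}) (Psi : 'I_m -> 'I_n -> A -> A) :
  vpreserves f (fun a => a \in rho) -> (forall j, upreserves (Psi j) rho) ->
  upreserves (vcomp Psi) rho.
Proof. by move=> fP PsiP a arho; rewrite uvapp_vcomp; apply: fP => j; apply: PsiP. Qed.

End VectorFunctions.

Lemma fun_choice (I T : Type) (P : I -> T -> Prop) :
  (forall i, exists x, P i x) -> exists g : I -> T, forall i, P i (g i).
Proof.
move=> exP; exists (fun i => proj1_sig (constructive_indefinite_description _ (exP i))).
by move=> i; case: constructive_indefinite_description.
Qed.

Theorem mainTheorem19 (A : finType) (n m : nat) (rho : {set {ffun 'I_n -> A}})
  (f : 'I_n -> ({ffun 'I_m -> A} -> A)) :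
  key_relation rho ->
  vpreserves f (fun a => a \in rho) ->
  vpreserves f (Key rho).
Proof.
move=> [b bkey] fP alpha alphaKey.
have [Psi PsiP] : exists Psi : 'I_m -> 'I_n -> A -> A,
    forall j, upreserves (Psi j) rho /\ uvapp (Psi j) b = alpha j.
  apply: (@fun_choice _ _ (fun j psi => upreserves psi rho /\ uvapp psi b = alpha j)).
  by move=> j; apply: key_tuple_reaches_Key.
have PhiP : upreserves (vcomp f Psi) rho.
  by apply: upreserves_vcomp => // j; case: (PsiP j).
have Phib : uvapp (vcomp f Psi) b = vapp f alpha.
  by rewrite uvapp_vcomp; apply: eq_vapp => j; case: (PsiP j).
have [fa_rho | fa_Nrho] := boolP (vapp f alpha \in rho); first by left.
by right; rewrite -Phib; apply: (key_tuple_image bkey PhiP); rewrite Phib.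
Qed.
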